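(* Let $\alpha_a$ be a labeled dGL hybrid game and $\varphi$ a formula, and let $M$ be the model predictive Angelic subvalue map for $\alpha_a$ and $\varphi$. Then $\models\langle\mathcal{P}(\alpha_a,M)\rangle\varphi\leftrightarrow\langle\alpha\rangle\varphi$. Dually, if $M'$ is the model predictive Demonic subvalue map for $\alpha_a$ and $\varphi$, then $\models[\mathcal{D}(\alpha_a,M')]\varphi\leftrightarrow[\alpha]\varphi$.
   Context: Differential game logic (dGL). Hybrid games are generated by $\alpha,\beta ::= x:=e \mid \alpha;\beta \mid ?Q \mid \{x'=f(x)\,\&\,Q\} \mid \alpha^{*} \mid \alpha\cup\beta \mid x:=* \mid\ !Q \mid \{x'=f(x)\,\&\,Q\}^{d} \mid \alpha^{\times} \mid \alpha\cap\beta \mid x:=\otimes$, with $x$ a real variable (vector for ODEs), $e,f(x)$ polynomial terms, $Q$ a formula. Players Angel and Demon: $x:=e$ deterministic assignment; in $x:=*$ Angel (in $x:=\otimes$ Demon) assigns any real; in $\{x'=f(x)\&Q\}$ Angel (in $\{\cdot\}^d$ Demon) chooses a duration $r\ge 0$ of following the ODE with $Q$ true throughout; $?Q$ makes Angel lose and $!Q$ makes Demon lose if $Q$ is false; in $\alpha\cup\beta$ Angel (in $\alpha\cap\beta$ Demon) chooses the branch; in $\alpha^*$ Angel (in $\alpha^\times$ Demon) decides before each iteration whether to repeat or stop; $\alpha;\beta$ sequential. Formulas: polynomial (in)equalities closed under connectives, real quantifiers, and modalities $\langle\alpha\rangle\varphi$ (Angel can win $\alpha$ reaching $\varphi$) and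 $[\alpha]\varphi\equiv\neg\langle\alpha\rangle\neg\varphi$, with the standard dGL winning-region semantics ($\langle x:=*\rangle\varphi\leftrightarrow\exists x\varphi$, $\langle x:=\otimes\rangle\varphi\leftrightarrow\forall x\varphi$, $\langle ?Q\rangle\varphi\leftrightarrow Q\wedge\varphi$, $\langle !Q\rangle\varphi\leftrightarrow(Q\rightarrow\varphi)$, $\cup$ as disjunction, $\cap$ as conjunction, $\langle\alpha;\beta\rangle\varphi\leftrightarrow\langle\alpha\rangle\langle\beta\rangle\varphi$, Angel ODE existential, Demon ODE universal, $\langle\alpha^*\rangle$ least and $\langle\alpha^\times\rangle$ greatest fixed point). $\models$ denotes validity. Labels: every node of the syntax tree carries a unique label; $\alpha_a$ has root label $a$; $\mathrm{nodes}(\alpha_a)$ is its set of subgame labels; $\mathsf{end}$ is a special extra label. A map $S$ assigns formulas to a label set containing $\mathrm{nodes}(\alpha_a)\cup\{\mathsf{end}\}$; $S\{\mathsf{end}\mapsto Q\}$ replaces the value at $\mathsf{end}$. $\gamma_g,\delta_d$ denote immediate subgames with root labels $g,d$. Game suffix: $\mathrm{suffix}_a(\alpha_a)=\alpha_a$; for $b\ne a$: for loops $((\gamma_g)^* )_a,((\gamma_g)^\times)_a$ it is $\mathrm{suffix}_b(\gamma_g);\alpha_a$; for $\cup,\cap$ the suffix within the branch containing $b$; for $(\gamma_g;\delta_d)_a$ it is $\mathrm{suffix}_b(\gamma_g);\delta_d$ if $b\in\mathrm{nodes}(\gamma_g)$ else $\mathrm{suffix}_b(\delta_d)$. Model predictive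 Angelic subvalue map for $\alpha_a$ and $\varphi$: $M(\mathsf{end})=\varphi$ and $M(b)=\langle\mathrm{suffix}_b(\alpha_a)\rangle\varphi$ for $b\in\mathrm{nodes}(\alpha_a)$. Model predictive Demonic subvalue map: $M'(\mathsf{end})=\varphi$ and $M'(b)=[\mathrm{suffix}_b(\alpha_a)]\varphi$. Angelic existential projection $\mathcal{P}(\alpha_a,S)$: $(x:=* )_a\mapsto(x:=* )_a;?S(\mathsf{end})$; Angel ODE $\mapsto$ ODE$;?S(\mathsf{end})$; $(\gamma_g\cup\delta_d)_a\mapsto(?S(g);\mathcal{P}(\gamma_g,S))\cup(?S(d);\mathcal{P}(\delta_d,S))$; $((\gamma_g)^* )_a\mapsto(?S(g);\mathcal{P}(\gamma_g,S\{\mathsf{end}\mapsto S(a)\}))^*;?S(\mathsf{end})$; $(\gamma_g;\delta_d)_a\mapsto\mathcal{P}(\gamma_g,S\{\mathsf{end}\mapsto S(d)\});\mathcal{P}(\delta_d,S)$; $\cap\mapsto\mathcal{P}(\gamma_g,S)\cap\mathcal{P}(\delta_d,S)$; $((\gamma_g)^\times)_a\mapsto\mathcal{P}(\gamma_g,S\{\mathsf{end}\mapsto S(a)\})^\times$; $x:=e,x:=\otimes,?Q,!Q$, Demon ODE unchanged (labels preserved, new nodes fresh labels). Demonic existential projection $\mathcal{D}(\alpha_a,S)$: $(x:=\otimes)_a\mapsto(x:=\otimes)_a;!S(\mathsf{end})$; Demon ODE $\mapsto$ ODE$^d;!S(\mathsf{end})$; $(\gamma_g\cap\delta_d)_a\mapsto(!S(g);\mathcal{D}(\gamma_g,S))\cap(!S(d);\mathcal{D}(\delta_d,S))$;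 $((\gamma_g)^\times)_a\mapsto(!S(g);\mathcal{D}(\gamma_g,S\{\mathsf{end}\mapsto S(g)\vee S(\mathsf{end})\}))^\times;!S(\mathsf{end})$; $(\gamma_g;\delta_d)_a\mapsto\mathcal{D}(\gamma_g,S\{\mathsf{end}\mapsto S(d)\});\mathcal{D}(\delta_d,S)$; $\cup\mapsto\mathcal{D}(\gamma_g,S)\cup\mathcal{D}(\delta_d,S)$; $((\gamma_g)^* )_a\mapsto\mathcal{D}(\gamma_g,S\{\mathsf{end}\mapsto S(a)\})^*$; $x:=e,x:=*,?Q,!Q$, Angel ODE unchanged. *)

From Stdlib Require Import Reals List Arith.
Import ListNotations.
Open Scope R_scope.

Definition var := nat.
Definition state := var -> R.

Definition upd (w : state) (x : var) (r : R) : state :=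
  fun y => if Nat.eqb y x then r else w y.

Inductive term : Type :=
| TVar (x : var)
| TConst (c : R)
| TNeg (t : term)
| TPlus (t1 t2 : term)
| TTimes (t1 t2 : term).

Fixpoint term_sem (t : term) (w : state) : R :=
  match t with
  | TVar x => w x
  | TConst c => c
  | TNeg t => - term_sem t w
  | TPlus t1 t2 => term_sem t1 w + term_sem t2 w
  | TTimes t1 t2 => term_sem t1 w * term_sem t2 w
  end.

(** An ODE system x1'=f1, ..., xn'=fn is a list of pairs (xi, fi). *)
Definition ode := list (var * term).

(** Every game node carries a label (a nat), the first argument of each
    constructor. The special label [end] is [End] of type [label] below. *)
Inductive game : Type :=
| GAssign (l : nat) (x : var) (e : term)
| GAny (l : nat) (x : var)                         (* x := *      (Angel) *)
| GDAny (l : nat) (x : var)                        (* x := ⊗      (Demon) *)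
| GTest (l : nat) (Q : fmla)
| GDTest (l : nat) (Q : fmla)                      (* !Q *)
| GODE (l : nat) (o : ode) (Q : fmla)              (* {x'=f & Q}    (Angel) *)
| GDODE (l : nat) (o : ode) (Q : fmla)             (* {x'=f & Q}^d  (Demon) *)
| GSeq (l : nat) (g1 g2 : game)
| GChoice (l : nat) (g1 g2 : game)
| GDChoice (l : nat) (g1 g2 : game)                (* g1 ∩ g2 *)
| GStar (l : nat) (g : game)
| GCross (l : nat) (g : game)                      (* g^×  *)
with fmla : Type :=
| FGeq (t1 t2 : term)
| FGt (t1 t2 : term)
| FEq (t1 t2 : term)
| FNot (p : fmla)
| FAnd (p q : fmla)
| FOr (p q : fmla)
| FImp (p q : fmla)
| FAll (x : var) (p : fmla)
| FEx (x : var) (p : fmla)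
| Dia (g : game) (p : fmla).

Definition Box (g : game) (p : fmla) : fmla := FNot (Dia g (FNot p)).
Definition FEquiv (p q : fmla) : fmla := FAnd (FImp p q) (FImp q p).

Definition ode_var (o : ode) (z : var) : Prop := exists e, In (z, e) o.

Definition ode_sol (o : ode) (Qs : state -> Prop) (w : state) (r : R)
  (y : R -> state) : Prop :=
  0 <= r /\ y 0 = w /\
  (forall t, 0 <= t <= r ->
     Qs (y t) /\
     (forall z, ~ ode_var o z -> y t z = w z) /\
     (forall x e, In (x, e) o ->
        derivable_pt_lim (fun s => y s x) t (term_sem e (y t)))).

Fixpoint game_sem (g : game) (X : state -> Prop) {struct g} : state -> Prop :=
  match g with
  | GAssign _ x e => fun w => X (upd w x (term_sem e w))
  | GAny _ x => fun w => exists r, X (upd w x r)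
  | GDAny _ x => fun w => forall r, X (upd w x r)
  | GTest _ Q => fun w => fmla_sem Q w /\ X w
  | GDTest _ Q => fun w => fmla_sem Q w -> X w
  | GODE _ o Q => fun w =>
      exists r y, ode_sol o (fmla_sem Q) w r y /\ X (y r)
  | GDODE _ o Q => fun w =>
      forall r y, ode_sol o (fmla_sem Q) w r y -> X (y r)
  | GSeq _ g1 g2 => game_sem g1 (game_sem g2 X)
  | GChoice _ g1 g2 => fun w => game_sem g1 X w \/ game_sem g2 X w
  | GDChoice _ g1 g2 => fun w => game_sem g1 X w /\ game_sem g2 X w
  | GStar _ g1 => fun w =>
      forall Z : state -> Prop,
        (forall v, X v \/ game_sem g1 Z v -> Z v) -> Z w
  | GCross _ g1 => fun w =>
      exists Z : state -> Prop,
        (forall v, Z v -> X v /\ game_sem g1 Z v) /\ Z w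
  end
with fmla_sem (p : fmla) (w : state) {struct p} : Prop :=
  match p with
  | FGeq t1 t2 => term_sem t1 w >= term_sem t2 w
  | FGt t1 t2 => term_sem t1 w > term_sem t2 w
  | FEq t1 t2 => term_sem t1 w = term_sem t2 w
  | FNot p => ~ fmla_sem p w
  | FAnd p q => fmla_sem p w /\ fmla_sem q w
  | FOr p q => fmla_sem p w \/ fmla_sem q w
  | FImp p q => fmla_sem p w -> fmla_sem q w
  | FAll x p => forall r, fmla_sem p (upd w x r)
  | FEx x p => exists r, fmla_sem p (upd w x r)
  | Dia g p => game_sem g (fmla_sem p) w
  end.

Definition valid (p : fmla) : Prop := forall w, fmla_sem p w.

Definition lab (g : game) : nat :=
  match g with
  | GAssign l _ _ | GAny l _ | GDAny l _ | GTest l _ | GDTest l _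
  | GODE l _ _ | GDODE l _ _ | GSeq l _ _ | GChoice l _ _
  | GDChoice l _ _ | GStar l _ | GCross l _ => l
  end.

(** nodes(α): labels of all subgames (not descending into formulas). *)
Fixpoint nodes (g : game) : list nat :=
  match g with
  | GSeq l g1 g2 | GChoice l g1 g2 | GDChoice l g1 g2 =>
      l :: nodes g1 ++ nodes g2
  | GStar l g1 | GCross l g1 => l :: nodes g1
  | _ => [lab g]
  end.

Definition memb (b : nat) (s : list nat) : bool := existsb (Nat.eqb b) s.

(** Label domain of subvalue maps: node labels plus the extra label [end]. *)
Inductive label : Type := End | Node (b : nat).

Definition upd_end (S : label -> fmla) (Q : fmla) : label -> fmla :=
  fun l => match l with End => Q | Node b => S (Node b) end.

(** Only meaningful for b ∈ nodes(α_a); the labels of the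
    sequential-composition nodes it creates are irrelevant (the semantics
    ignores labels), we reuse the label of the enclosing node. *)
Fixpoint suffix (b : nat) (g : game) : game :=
  if Nat.eqb b (lab g) then g else
  match g with
  | GStar a g1 => GSeq a (suffix b g1) g
  | GCross a g1 => GSeq a (suffix b g1) g
  | GChoice _ g1 g2 | GDChoice _ g1 g2 =>
      if memb b (nodes g1) then suffix b g1 else suffix b g2
  | GSeq a g1 g2 =>
      if memb b (nodes g1) then GSeq a (suffix b g1) g2 else suffix b g2
  | _ => g
  end.

Definition mpAngel (alpha : game) (phi : fmla) : label -> fmla :=
  fun l => match l with End => phi | Node b => Dia (suffix b alpha) phi end.

Definition mpDemon (alpha : game) (phi : fmla) : label -> fmla :=
  fun l => match l with End => phi | Node b => Box (suffix b alpha) phi end.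

Local Open Scope nat_scope.

(** * Existential projections.
    The counter [n] supplies fresh labels for newly created nodes; original
    nodes keep their labels. *)
Fixpoint projA (g : game) (S : label -> fmla) (n : nat) : game * nat :=
  match g with
  | GAny a x => (GSeq n (GAny a x) (GTest (n+1) (S End)), n+2)
  | GODE a o Q => (GSeq n (GODE a o Q) (GTest (n+1) (S End)), n+2)
  | GChoice a g1 g2 =>
      let '(p1, n1) := projA g1 S n in
      let '(p2, n2) := projA g2 S n1 in
      (GChoice a (GSeq n2 (GTest (n2+1) (S (Node (lab g1)))) p1)
                 (GSeq (n2+2) (GTest (n2+3) (S (Node (lab g2)))) p2), n2+4)
  | GStar a g1 =>
      let '(p, n1) := projA g1 (upd_end S (S (Node a))) n in
      (GSeq n1 (GStar a (GSeq (n1+1) (GTest (n1+2) (S (Node (lab g1)))) p))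
               (GTest (n1+3) (S End)), n1+4)
  | GSeq a g1 g2 =>
      let '(p1, n1) := projA g1 (upd_end S (S (Node (lab g2)))) n in
      let '(p2, n2) := projA g2 S n1 in
      (GSeq a p1 p2, n2)
  | GDChoice a g1 g2 =>
      let '(p1, n1) := projA g1 S n in
      let '(p2, n2) := projA g2 S n1 in
      (GDChoice a p1 p2, n2)
  | GCross a g1 =>
      let '(p, n1) := projA g1 (upd_end S (S (Node a))) n in
      (GCross a p, n1)
  | _ => (g, n)
  end.

Fixpoint projD (g : game) (S : label -> fmla) (n : nat) : game * nat :=
  match g with
  | GDAny a x => (GSeq n (GDAny a x) (GDTest (n+1) (S End)), n+2)
  | GDODE a o Q => (GSeq n (GDODE a o Q) (GDTest (n+1) (S End)), n+2)
  | GDChoice a g1 g2 =>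
      let '(p1, n1) := projD g1 S n in
      let '(p2, n2) := projD g2 S n1 in
      (GDChoice a (GSeq n2 (GDTest (n2+1) (S (Node (lab g1)))) p1)
                  (GSeq (n2+2) (GDTest (n2+3) (S (Node (lab g2)))) p2), n2+4)
  | GCross a g1 =>
      let '(p, n1) :=
        projD g1 (upd_end S (FOr (S (Node (lab g1))) (S End))) n in
      (GSeq n1 (GCross a (GSeq (n1+1) (GDTest (n1+2) (S (Node (lab g1)))) p))
               (GDTest (n1+3) (S End)), n1+4)
  | GSeq a g1 g2 =>
      let '(p1, n1) := projD g1 (upd_end S (S (Node (lab g2)))) n in
      let '(p2, n2) := projD g2 S n1 in
      (GSeq a p1 p2, n2)
  | GChoice a g1 g2 =>
      let '(p1, n1) := projD g1 S n in
      let '(p2, n2) := projD g2 S n1 in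
      (GChoice a p1 p2, n2)
  | GStar a g1 =>
      let '(p, n1) := projD g1 (upd_end S (S (Node a))) n in
      (GStar a p, n1)
  | _ => (g, n)
  end.

Definition fresh (g : game) : nat := S (list_max (nodes g)).
Definition projAngel (g : game) (Sm : label -> fmla) : game :=
  fst (projA g Sm (fresh g)).
Definition projDemon (g : game) (Sm : label -> fmla) : game :=
  fst (projD g Sm (fresh g)).

From Stdlib Require Import Reals List Classical.

(* The projections only insert tests, so P(α,S) can only shrink Angel's winning
   region and D(α,S) can only enlarge Demon's, whatever S is.  Conversely, the
   test P inserts before a node b checks S(b), and when S is the subvalue map of
   α for a goal X, S(b) holds exactly where Angel can win the rest of α from b;
   so a winning play never fails a test.  The induction keeps S correct for X
   while Angel pursues any smaller goal Z ⊆ X, since loops and sequential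
   composition hand their subgames the goals ⟨α^*⟩X, ⟨α^×⟩X and ⟨δ⟩X.  The
   Demonic case is the classical dual; at a Demon loop the new end formula
   S(g) ∨ S(end) denotes ¬⟨γ⟩⟨α^×⟩X ∨ ¬X, the complement of ⟨α^×⟩X by the
   greatest-fixpoint equation. *)

Lemma game_sem_mono (g : game) (X Y : state -> Prop) :
  (forall w, X w -> Y w) -> forall w, game_sem g X w -> game_sem g Y w.
Proof.
  revert X Y; induction g; intros X Y HXY w H; simpl in *.
  - auto.
  - destruct H as [r Hr]; eauto.
  - auto.
  - destruct H; auto.
  - auto.
  - destruct H as [r [y [Hy Hr]]]; eauto.
  - eauto.
  - eapply IHg1; [|exact H]. intro v; apply IHg2; auto.
  - destruct H; [left|right]; eauto.
  - destruct H; split; eauto.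
  - intros Z HZ; apply H. intros v [Hv|Hv]; apply HZ; [left|right]; auto.
  - destruct H as [Z [HZ Hw]]; exists Z; split; auto.
    intros v Hv; destruct (HZ v Hv); auto.
Qed.

Lemma star_fold (a : nat) (g : game) (X : state -> Prop) (w : state) :
  X w \/ game_sem g (game_sem (GStar a g) X) w -> game_sem (GStar a g) X w.
Proof.
  intros H Z HZ. apply HZ. destruct H as [H|H]; [now left | right].
  eapply game_sem_mono; [|exact H]. intros v Hv; now apply Hv.
Qed.

Lemma cross_unfold (a : nat) (g : game) (X : state -> Prop) (w : state) :
  game_sem (GCross a g) X w -> X w /\ game_sem g (game_sem (GCross a g) X) w.
Proof.
  intros [W [HW Hw]]. destruct (HW w Hw) as [HX Hg]. split; auto.
  eapply game_sem_mono; [|exact Hg]. intros v Hv. now exists W.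
Qed.

Lemma cross_fold (a : nat) (g : game) (X : state -> Prop) (w : state) :
  X w /\ game_sem g (game_sem (GCross a g) X) w -> game_sem (GCross a g) X w.
Proof.
  intro H. exists (fun v => X v /\ game_sem g (game_sem (GCross a g) X) v).
  split; auto. intros v [HX Hg]; split; auto.
  eapply game_sem_mono; [|exact Hg]. intros u Hu. now apply cross_unfold.
Qed.

Lemma lab_in_nodes (g : game) : In (lab g) (nodes g).
Proof. destruct g; simpl; auto. Qed.

Lemma suffix_lab (g : game) : suffix (lab g) g = g.
Proof. destruct g; simpl; now rewrite Nat.eqb_refl. Qed.

Lemma memb_In (b : nat) (l : list nat) : memb b l = true <-> In b l.
Proof.
  unfold memb. rewrite existsb_exists. split.
  - intros [x [Hx Hb]]. apply Nat.eqb_eq in Hb. now subst.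
  - intro H. exists b. split; auto. apply Nat.eqb_refl.
Qed.

Lemma memb_notin (b : nat) (l : list nat) : ~ In b l -> memb b l = false.
Proof. intro H. apply Bool.not_true_iff_false. now rewrite memb_In. Qed.

Lemma NoDup_app_disjoint {A : Type} (l1 l2 : list A) (x : A) :
  NoDup (l1 ++ l2) -> In x l1 -> ~ In x l2.
Proof.
  induction l1 as [|y l1 IH]; simpl; intros H Hx; [contradiction|].
  inversion_clear H as [|? ? Hy Hnd]. destruct Hx as [<-|Hx].
  - intro Hx2. apply Hy, in_or_app; auto.
  - auto.
Qed.

Lemma NoDup_node (a : nat) (l1 l2 : list nat) :
  NoDup (a :: l1 ++ l2) ->
  NoDup l1 /\ NoDup l2 /\ ~ In a l1 /\ ~ In a l2 /\
  (forall b, In b l1 -> ~ In b l2).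
Proof.
  intro H. inversion_clear H as [|? ? Ha Hnd].
  repeat split.
  - exact (NoDup_app_remove_r _ _ Hnd).
  - exact (NoDup_app_remove_l _ _ Hnd).
  - intro; apply Ha, in_or_app; auto.
  - intro; apply Ha, in_or_app; auto.
  - intros b; apply NoDup_app_disjoint, Hnd.
Qed.

Lemma suffix_seq_l (a b : nat) (g1 g2 : game) :
  NoDup (nodes (GSeq a g1 g2)) -> In b (nodes g1) ->
  suffix b (GSeq a g1 g2) = GSeq a (suffix b g1) g2.
Proof.
  intros Hnd Hb. simpl in *. apply NoDup_node in Hnd as (_ & _ & Ha & _).
  destruct (Nat.eqb_spec b a) as [->|_]; [contradiction|].
  now rewrite (proj2 (memb_In _ _) Hb).
Qed.

Lemma suffix_seq_r (a b : nat) (g1 g2 : game) :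
  NoDup (nodes (GSeq a g1 g2)) -> In b (nodes g2) ->
  suffix b (GSeq a g1 g2) = suffix b g2.
Proof.
  intros Hnd Hb. simpl in *. apply NoDup_node in Hnd as (_ & _ & _ & Ha & Hd).
  destruct (Nat.eqb_spec b a) as [->|_]; [contradiction|].
  rewrite memb_notin; auto. intro Hb1. exact (Hd b Hb1 Hb).
Qed.

Lemma suffix_choice (mk : nat -> game -> game -> game) (a b : nat) (g1 g2 : game) :
  (mk = GChoice \/ mk = GDChoice) -> NoDup (nodes (mk a g1 g2)) ->
  (In b (nodes g1) -> suffix b (mk a g1 g2) = suffix b g1) /\
  (In b (nodes g2) -> suffix b (mk a g1 g2) = suffix b g2).
Proof.
  intros Hmk Hnd.
  assert (Hsuffix : b <> a -> suffix b (mk a g1 g2) =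
            if memb b (nodes g1) then suffix b g1 else suffix b g2).
  { intro Hba. destruct Hmk; subst; simpl; now rewrite (proj2 (Nat.eqb_neq _ _) Hba). }
  assert (Hnd' : NoDup (a :: nodes g1 ++ nodes g2)) by (now destruct Hmk; subst).
  apply NoDup_node in Hnd' as (_ & _ & Ha1 & Ha2 & Hd).
  split; intro Hb; rewrite Hsuffix by (intros ->; contradiction).
  - now rewrite (proj2 (memb_In _ _) Hb).
  - rewrite memb_notin; auto. intro Hb1. exact (Hd b Hb1 Hb).
Qed.

Lemma suffix_loop (mk : nat -> game -> game) (a b : nat) (g : game) :
  (mk = GStar \/ mk = GCross) -> NoDup (nodes (mk a g)) -> In b (nodes g) ->
  suffix b (mk a g) = GSeq a (suffix b g) (mk a g).
Proof.
  intros Hmk Hnd Hb.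
  destruct Hmk; subst; simpl in *; inversion_clear Hnd as [|? ? Ha _];
    destruct (Nat.eqb_spec b a) as [->|_]; easy.
Qed.

(* With [f] the identity, [S] is the Angelic subvalue map of [g] for the goal
   [X]; with [f = not] it is the Demonic one for the goal [~ X]. *)
Definition is_subvalue_map (f : Prop -> Prop) (S : label -> fmla) (g : game)
  (X : state -> Prop) : Prop :=
  (forall w, fmla_sem (S End) w <-> f (X w)) /\
  (forall b, In b (nodes g) ->
     forall w, fmla_sem (S (Node b)) w <-> f (game_sem (suffix b g) X w)).

Lemma subvalue_map_root (f : Prop -> Prop) (S : label -> fmla) (g : game)
  (X : state -> Prop) :
  is_subvalue_map f S g X ->
  forall w, fmla_sem (S (Node (lab g))) w <-> f (game_sem g X w).
Proof.
  intros [_ HN] w. rewrite HN by apply lab_in_nodes. now rewrite suffix_lab.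
Qed.

Lemma subvalue_map_seq (f : Prop -> Prop) (S : label -> fmla) (a : nat)
  (g1 g2 : game) (X : state -> Prop) :
  NoDup (nodes (GSeq a g1 g2)) -> is_subvalue_map f S (GSeq a g1 g2) X ->
  is_subvalue_map f (upd_end S (S (Node (lab g2)))) g1 (game_sem g2 X) /\
  is_subvalue_map f S g2 X.
Proof.
  intros Hnd [HE HN].
  assert (Hmap2 : is_subvalue_map f S g2 X).
  { split; auto. intros b Hb w. rewrite <- (suffix_seq_r a b g1 g2); auto.
    apply HN. simpl. auto using in_or_app. }
  split; auto. split.
  - exact (subvalue_map_root _ _ _ _ Hmap2).
  - intros b Hb w. simpl. rewrite HN by (simpl; auto using in_or_app).
    now rewrite suffix_seq_l.
Qed.

Lemma subvalue_map_choice (f : Prop -> Prop) (S : label -> fmla)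
  (mk : nat -> game -> game -> game) (a : nat) (g1 g2 : game) (X : state -> Prop) :
  (mk = GChoice \/ mk = GDChoice) -> NoDup (nodes (mk a g1 g2)) ->
  is_subvalue_map f S (mk a g1 g2) X ->
  is_subvalue_map f S g1 X /\ is_subvalue_map f S g2 X.
Proof.
  intros Hmk Hnd [HE HN].
  assert (Hnodes : nodes (mk a g1 g2) = a :: nodes g1 ++ nodes g2)
    by (now destruct Hmk; subst).
  split; split; auto; intros b Hb w;
    destruct (suffix_choice mk a b g1 g2 Hmk Hnd) as [Hs1 Hs2].
  - rewrite <- Hs1 by exact Hb. apply HN. rewrite Hnodes. simpl; auto using in_or_app.
  - rewrite <- Hs2 by exact Hb. apply HN. rewrite Hnodes. simpl; auto using in_or_app.
Qed.

Lemma subvalue_map_loop (f : Prop -> Prop) (S : label -> fmla)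
  (mk : nat -> game -> game) (a : nat) (g : game) (X : state -> Prop) :
  (mk = GStar \/ mk = GCross) -> NoDup (nodes (mk a g)) ->
  is_subvalue_map f S (mk a g) X ->
  is_subvalue_map f (upd_end S (S (Node a))) g (game_sem (mk a g) X).
Proof.
  intros Hmk Hnd [HE HN].
  assert (Hnodes : nodes (mk a g) = a :: nodes g) by (now destruct Hmk; subst).
  split.
  - intro w. simpl. rewrite HN by (rewrite Hnodes; now left).
    destruct Hmk; subst; simpl; now rewrite Nat.eqb_refl.
  - intros b Hb w. simpl. rewrite HN by (rewrite Hnodes; now right).
    now rewrite (suffix_loop mk a b g).
Qed.

Lemma subvalue_map_cross_demon (S : label -> fmla) (a : nat) (g : game)
  (X : state -> Prop) :
  NoDup (nodes (GCross a g)) -> is_subvalue_map not S (GCross a g) X ->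
  is_subvalue_map not (upd_end S (FOr (S (Node (lab g))) (S End))) g
    (game_sem (GCross a g) X).
Proof.
  intros Hnd Hmap.
  pose proof (subvalue_map_loop not S GCross a g X (or_intror eq_refl) Hnd Hmap)
    as Hloop.
  split; [|exact (proj2 Hloop)]. intro w.
  pose proof (subvalue_map_root _ _ _ _ Hloop w) as Hroot.
  cbn [upd_end fmla_sem] in Hroot |- *.
  rewrite Hroot, (proj1 Hmap).
  split.
  - intros Hnot Hc. apply cross_unfold in Hc as [HX Hg]. tauto.
  - intro Hc. destruct (classic (X w)); [left|right]; auto.
    intro Hg. apply Hc, cross_fold; auto.
Qed.

Ltac split_projection Heq :=
  simpl in Heq;
  repeat match type of Heq with
  | context [let (_, _) := ?c in _] => destruct c eqn:?
  end;
  injection Heq as <- <-.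

Lemma projA_sound (g : game) (S : label -> fmla) (n : nat) (p : game) (n' : nat) :
  projA g S n = (p, n') ->
  forall Z w, game_sem p Z w -> game_sem g Z w.
Proof.
  revert S n p n'.
  induction g; intros S n p n' Heq Z w H; split_projection Heq; simpl in *; auto.
  - destruct H as [r [_ Hr]]; eauto.
  - destruct H as [r [y [Hy [_ Hr]]]]; eauto.
  - eapply IHg1; [eassumption|]. eapply game_sem_mono; [|exact H].
    intro v; eapply IHg2; eassumption.
  - destruct H as [[_ H]|[_ H]]; [left|right]; eauto.
  - destruct H; split; eauto.
  - apply (H (game_sem (GStar l g) Z)).
    intros v [[_ Hv]|[_ Hv]]; apply star_fold; [left|right]; eauto.
  - destruct H as [W [HW Hw]]. exists W; split; auto.
    intros v Hv; destruct (HW v Hv); split; eauto.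
Qed.

Lemma projD_sound (g : game) (S : label -> fmla) (n : nat) (p : game) (n' : nat) :
  projD g S n = (p, n') ->
  forall Z w, game_sem g Z w -> game_sem p Z w.
Proof.
  revert S n p n'.
  induction g; intros S n p n' Heq Z w H; split_projection Heq; simpl in *; auto.
  - eapply game_sem_mono; [|eapply IHg1; eauto].
    intro v; eapply IHg2; eassumption.
  - destruct H; [left|right]; eauto.
  - destruct H; split; intros _; eauto.
  - intros K HK. apply H. intros v [Hv|Hv]; apply HK; [left|right]; eauto.
  - destruct H as [W [HW Hw]]. exists W; split; auto.
    intros v Hv; destruct (HW v Hv); split; eauto.
Qed.

Definition angel_complete (g : game) : Prop :=
  forall S n p n' X, NoDup (nodes g) -> projA g S n = (p, n') ->
  is_subvalue_map (fun P => P) S g X ->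
  forall Z, (forall w, Z w -> X w) -> forall w, game_sem g Z w -> game_sem p Z w.

Lemma angel_complete_seq (a : nat) (g1 g2 : game) :
  angel_complete g1 -> angel_complete g2 -> angel_complete (GSeq a g1 g2).
Proof.
  intros IH1 IH2 S n p n' X Hnd Heq Hmap Z HZX w Hw. split_projection Heq.
  destruct (subvalue_map_seq _ _ _ _ _ _ Hnd Hmap) as [Hmap1 Hmap2].
  simpl in Hnd. apply NoDup_node in Hnd as (Hnd1 & Hnd2 & _).
  simpl in Hw |- *. apply game_sem_mono with (X := game_sem g2 Z).
  - intro v. eapply IH2; eassumption.
  - eapply IH1; try eassumption. apply game_sem_mono, HZX.
Qed.

Lemma angel_complete_choice (a : nat) (g1 g2 : game) :
  angel_complete g1 -> angel_complete g2 -> angel_complete (GChoice a g1 g2).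
Proof.
  intros IH1 IH2 S n p n' X Hnd Heq Hmap Z HZX w Hw. split_projection Heq.
  destruct (subvalue_map_choice _ _ _ _ _ _ _ (or_introl eq_refl) Hnd Hmap)
    as [Hmap1 Hmap2].
  simpl in Hnd. apply NoDup_node in Hnd as (Hnd1 & Hnd2 & _).
  simpl in Hw |- *. destruct Hw as [Hw|Hw]; [left|right]; split.
  - apply (subvalue_map_root _ _ _ _ Hmap1). eapply game_sem_mono; eassumption.
  - eapply IH1; eassumption.
  - apply (subvalue_map_root _ _ _ _ Hmap2). eapply game_sem_mono; eassumption.
  - eapply IH2; eassumption.
Qed.

Lemma angel_complete_dchoice (a : nat) (g1 g2 : game) :
  angel_complete g1 -> angel_complete g2 -> angel_complete (GDChoice a g1 g2).
Proof.
  intros IH1 IH2 S n p n' X Hnd Heq Hmap Z HZX w Hw. split_projection Heq.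
  destruct (subvalue_map_choice _ _ _ _ _ _ _ (or_intror eq_refl) Hnd Hmap)
    as [Hmap1 Hmap2].
  simpl in Hnd. apply NoDup_node in Hnd as (Hnd1 & Hnd2 & _).
  simpl in Hw |- *. destruct Hw as [Hw1 Hw2]; split.
  - eapply IH1; eassumption.
  - eapply IH2; eassumption.
Qed.

Lemma angel_complete_star (a : nat) (g : game) :
  angel_complete g -> angel_complete (GStar a g).
Proof.
  intros IH S n p n' X Hnd Heq Hmap Z HZX w Hw.
  (* Induct over the least fixpoint with the projected region itself; soundness
     places it inside the loop's value, which is what the body test checks. *)
  pose proof (projA_sound _ _ _ _ _ Heq) as Hsound.
  pose proof (subvalue_map_loop _ _ _ _ _ _ (or_introl eq_refl) Hnd Hmap) as Hmap1.
  assert (HpX : forall v, game_sem p Z v -> game_sem (GStar a g) X v)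
    by (intros v Hv; eapply game_sem_mono, Hsound, Hv; exact HZX).
  apply (Hw (game_sem p Z)). intros v Hv.
  simpl in Heq. destruct (projA g _ n) as [p0 n1] eqn:E. injection Heq as <- <-.
  inversion_clear Hnd as [|? ? _ Hnd1].
  change (game_sem (GStar a (GSeq (n1+1) (GTest (n1+2) (S (Node (lab g)))) p0))
            (game_sem (GTest (n1+3) (S End)) Z) v).
  apply star_fold.
  destruct Hv as [Hv|Hv]; [left|right]; simpl; split.
  - apply (proj1 Hmap), HZX, Hv.
  - exact Hv.
  - apply (subvalue_map_root _ _ _ _ Hmap1). eapply game_sem_mono; eassumption.
  - eapply IH; eassumption.
Qed.

Lemma angel_complete_cross (a : nat) (g : game) :
  angel_complete g -> angel_complete (GCross a g).
Proof.
  intros IH S n p n' X Hnd Heq Hmap Z HZX w [W [HW Hw]].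
  pose proof (subvalue_map_loop _ _ _ _ _ _ (or_intror eq_refl) Hnd Hmap) as Hmap1.
  split_projection Heq. inversion_clear Hnd as [|? ? _ Hnd1].
  assert (HWX : forall v, W v -> game_sem (GCross a g) X v).
  { intros v Hv. exists W. split; auto.
    intros u Hu. destruct (HW u Hu). auto. }
  exists W. split; auto. intros v Hv. destruct (HW v Hv) as [HZ Hg]. split; auto.
  eapply IH; eassumption.
Qed.

Lemma projA_complete (g : game) : angel_complete g.
Proof.
  induction g;
    [..|now apply angel_complete_seq|now apply angel_complete_choice
       |now apply angel_complete_dchoice|now apply angel_complete_star
       |now apply angel_complete_cross];
    intros S n p n' X Hnd Heq Hmap Z HZX w Hw; split_projection Heq; try exact Hw.
  - destruct Hw as [r Hr]. exists r.
    split; [apply (proj1 Hmap), HZX, Hr | exact Hr].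
  - destruct Hw as [r [y [Hy Hr]]]. exists r, y.
    split; [exact Hy|]. split; [apply (proj1 Hmap), HZX, Hr | exact Hr].
Qed.

Definition demon_complete (g : game) : Prop :=
  forall S n p n' X, NoDup (nodes g) -> projD g S n = (p, n') ->
  is_subvalue_map not S g X ->
  forall Z, (forall w, X w -> Z w) -> forall w, game_sem p Z w -> game_sem g Z w.

Lemma demon_complete_seq (a : nat) (g1 g2 : game) :
  demon_complete g1 -> demon_complete g2 -> demon_complete (GSeq a g1 g2).
Proof.
  intros IH1 IH2 S n p n' X Hnd Heq Hmap Z HXZ w Hw. split_projection Heq.
  destruct (subvalue_map_seq _ _ _ _ _ _ Hnd Hmap) as [Hmap1 Hmap2].
  simpl in Hnd. apply NoDup_node in Hnd as (Hnd1 & Hnd2 & _).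
  simpl in Hw |- *. eapply IH1; try eassumption.
  - apply game_sem_mono, HXZ.
  - eapply game_sem_mono; [|exact Hw]. intro v. eapply IH2; eassumption.
Qed.

Lemma demon_complete_choice (a : nat) (g1 g2 : game) :
  demon_complete g1 -> demon_complete g2 -> demon_complete (GChoice a g1 g2).
Proof.
  intros IH1 IH2 S n p n' X Hnd Heq Hmap Z HXZ w Hw. split_projection Heq.
  destruct (subvalue_map_choice _ _ _ _ _ _ _ (or_introl eq_refl) Hnd Hmap)
    as [Hmap1 Hmap2].
  simpl in Hnd. apply NoDup_node in Hnd as (Hnd1 & Hnd2 & _).
  simpl in Hw |- *. destruct Hw as [Hw|Hw]; [left|right].
  - eapply IH1; eassumption.
  - eapply IH2; eassumption.
Qed.

Lemma demon_complete_dchoice (a : nat) (g1 g2 : game) :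
  demon_complete g1 -> demon_complete g2 -> demon_complete (GDChoice a g1 g2).
Proof.
  intros IH1 IH2 S n p n' X Hnd Heq Hmap Z HXZ w Hw. split_projection Heq.
  destruct (subvalue_map_choice _ _ _ _ _ _ _ (or_intror eq_refl) Hnd Hmap)
    as [Hmap1 Hmap2].
  simpl in Hnd. apply NoDup_node in Hnd as (Hnd1 & Hnd2 & _).
  simpl in Hw |- *. destruct Hw as [Hw1 Hw2]; split.
  - destruct (classic (game_sem g1 Z w)) as [|Hlost]; [assumption|].
    eapply IH1; try eassumption. apply Hw1, (subvalue_map_root _ _ _ _ Hmap1).
    intro HX. apply Hlost. eapply game_sem_mono; eassumption.
  - destruct (classic (game_sem g2 Z w)) as [|Hlost]; [assumption|].
    eapply IH2; try eassumption. apply Hw2, (subvalue_map_root _ _ _ _ Hmap2).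
    intro HX. apply Hlost. eapply game_sem_mono; eassumption.
Qed.

Lemma demon_complete_star (a : nat) (g : game) :
  demon_complete g -> demon_complete (GStar a g).
Proof.
  intros IH S n p n' X Hnd Heq Hmap Z HXZ w Hw.
  pose proof (subvalue_map_loop _ _ _ _ _ _ (or_introl eq_refl) Hnd Hmap) as Hmap1.
  split_projection Heq. inversion_clear Hnd as [|? ? _ Hnd1].
  apply (Hw (game_sem (GStar a g) Z)). intros v [Hv|Hv]; apply star_fold.
  - now left.
  - right. eapply IH; try eassumption. apply game_sem_mono, HXZ.
Qed.

Lemma demon_complete_cross (a : nat) (g : game) :
  demon_complete g -> demon_complete (GCross a g).
Proof.
  intros IH S n p n' X Hnd Heq Hmap Z HXZ w Hw.
  pose proof (subvalue_map_cross_demon _ _ _ _ Hnd Hmap) as Hmap1.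
  pose proof (subvalue_map_root _ _ _ _ Hmap1) as Hroot. cbn [upd_end] in Hroot.
  split_projection Heq. inversion_clear Hnd as [|? ? _ Hnd1].
  set (GX := game_sem (GCross a g) X) in *.
  set (GZ := game_sem (GCross a g) Z).
  assert (HGXZ : forall v, GX v -> GZ v) by (apply game_sem_mono, HXZ).
  destruct Hw as [W [HW Hw]].
  (* Where the body test S(g) fails, ⟨γ⟩⟨α^×⟩X already holds, so the
     projected invariant W must be enlarged by the unprojected region. *)
  exists (fun v => W v \/ GZ v). split; [|now left].
  intros v [Hv|Hv].
  - destruct (HW v Hv) as [Hend Hbody]. split.
    + destruct (classic (X v)); auto. apply Hend, (proj1 Hmap); assumption.
    + destruct (classic (fmla_sem (S (Node (lab g))) v)) as [Hs|Hs].
      * eapply IH; try eassumption.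
        -- intros u Hu; right; auto.
        -- eapply game_sem_mono, Hbody, Hs. intros u Hu; now left.
      * rewrite Hroot in Hs. apply NNPP in Hs.
        eapply game_sem_mono, Hs. intros u Hu; right; auto.
  - apply cross_unfold in Hv as [HZ Hg]. split; auto.
    eapply game_sem_mono, Hg. intros u Hu; now right.
Qed.

Lemma projD_complete (g : game) : demon_complete g.
Proof.
  induction g;
    [..|now apply demon_complete_seq|now apply demon_complete_choice
       |now apply demon_complete_dchoice|now apply demon_complete_star
       |now apply demon_complete_cross];
    intros S n p n' X Hnd Heq Hmap Z HXZ w Hw; split_projection Heq; try exact Hw.
  - intro r. destruct (classic (X (upd w x r))); auto.
    apply Hw, (proj1 Hmap); assumption.
  - intros r y Hy. destruct (classic (X (y r))); auto.
    apply (Hw r y Hy), (proj1 Hmap); assumption.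
Qed.

Lemma projA_equiv (g : game) (S : label -> fmla) (n : nat) (p : game) (n' : nat)
  (X : state -> Prop) :
  NoDup (nodes g) -> projA g S n = (p, n') -> is_subvalue_map (fun P => P) S g X ->
  forall w, game_sem p X w <-> game_sem g X w.
Proof.
  intros Hnd Heq Hmap w. split.
  - apply (projA_sound _ _ _ _ _ Heq).
  - eapply projA_complete; eauto.
Qed.

Lemma projD_equiv (g : game) (S : label -> fmla) (n : nat) (p : game) (n' : nat)
  (X : state -> Prop) :
  NoDup (nodes g) -> projD g S n = (p, n') -> is_subvalue_map not S g X ->
  forall w, game_sem p X w <-> game_sem g X w.
Proof.
  intros Hnd Heq Hmap w. split.
  - eapply projD_complete; eauto.
  - apply (projD_sound _ _ _ _ _ Heq).
Qed.

Lemma mpAngel_subvalue_map (alpha : game) (phi : fmla) :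
  is_subvalue_map (fun P => P) (mpAngel alpha phi) alpha (fmla_sem phi).
Proof. split; reflexivity. Qed.

Lemma mpDemon_subvalue_map (alpha : game) (phi : fmla) :
  is_subvalue_map not (mpDemon alpha phi) alpha (fun w => ~ fmla_sem phi w).
Proof.
  split; [|reflexivity]. intro w. simpl. split; [tauto | apply NNPP].
Qed.

Theorem mainTheorem6 (alpha : game) (phi : fmla)
  (Huniq : NoDup (nodes alpha)) :
  valid (FEquiv (Dia (projAngel alpha (mpAngel alpha phi)) phi)
                (Dia alpha phi)) /\
  valid (FEquiv (Box (projDemon alpha (mpDemon alpha phi)) phi)
                (Box alpha phi)).
Proof.
  unfold projAngel, projDemon.
  destruct (projA alpha (mpAngel alpha phi) (fresh alpha)) as [pA nA] eqn:EA.
  destruct (projD alpha (mpDemon alpha phi) (fresh alpha)) as [pD nD] eqn:ED.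
  split; intro w; simpl.
  - pose proof (projA_equiv _ _ _ _ _ _ Huniq EA (mpAngel_subvalue_map alpha phi) w).
    tauto.
  - pose proof (projD_equiv _ _ _ _ _ _ Huniq ED (mpDemon_subvalue_map alpha phi) w).
    tauto.
Qed.
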